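(* Let $\Gamma$ be a finitely generated stable LEF group, $\pi:\mathbb{F}\twoheadrightarrow\Gamma$ an epimorphism from a free group on a finite basis $X$, $S=\pi(X)$, and suppose there exists $C\ge1$ such that $F_\Gamma^\pi(x)\le Cx^C$ for all $x\ge1$. Then there exists $C'>0$ such that for every positive integer $l$, $\mathcal{L}_\Gamma^S(C'l^C)!\ge\mathcal{R}_\Gamma^S(l)$.
   Context: For finite $\Omega$, $d_\Omega(\sigma,\tau)=|\{\omega:\sigma(\omega)\ne\tau(\omega)\}|/|\Omega|$. A pair $(\delta,E)$, $\delta\in(0,1]$, $E\subseteq\ker\pi$ finite, is valid for $\epsilon>0$ if for every finite $\Omega$ and homomorphism $\rho:\mathbb{F}\to\mathrm{Sym}(\Omega)$ with $d_\Omega(\rho(r),\mathrm{id})<\delta$ for all $r\in E$ there is a homomorphism $\phi:\Gamma\to\mathrm{Sym}(\Omega)$ with $d_\Omega(\rho(x),\phi(\pi(x)))<\epsilon$ for all $x\in X$; $\Gamma$ is stable if valid pairs exist for all $\epsilon$. $F_\Gamma^\pi(x)=\inf\{\|E\|/\delta:(\delta,E)\text{ valid for }1/x\}$, $\|E\|=\sum_{r\in E}|r|$. $B_S(t)$ is the ball of radius $t$ in the word metric of $S$. A local embedding of $A\subseteq\Gamma$ into a group $\Delta$ is an injective map $\psi$ with $\psi(gh)=\psi(g)\psi(h)$ whenever $g,h,gh\in A$; $\Gamma$ is LEF if every finite subset locally embeds in a finite group. $\mathcal{L}_\Gamma^S(t)$ is the minimal order of a finite group admitting a local embedding of $B_S(t)$;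 $\mathcal{R}_\Gamma^S(l)$ is the minimal order of a finite group $\Delta$ with a homomorphism $\Gamma\to\Delta$ injective on $B_S(l)$. *)

From HB Require Import structures.
From mathcomp Require Import all_boot all_order all_algebra all_fingroup.
From mathcomp Require Import all_classical all_reals all_analysis.

Set Implicit Arguments.
Unset Strict Implicit.
Unset Printing Implicit Defensive.

Import Order.TTheory GRing.Theory Num.Theory.

(* A letter is (x, b) with b = true meaning x^{-1}.  Elements of F are *)
(* the freely reduced words.                                           *)
Definition letter (k : nat) := ('I_k * bool)%type.

Definition reduced_word (k : nat) (w : seq (letter k)) : bool :=
  sorted (fun a b : letter k => ~~ ((a.1 == b.1) && (a.2 != b.2))) w.

Definition word_len (k : nat) (w : seq (letter k)) : nat := size w.

Definition eval_word (k : nat) (G : groupType) (s : 'I_k -> G)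
  (w : seq (letter k)) : G :=
  foldr (fun a acc => ((if a.2 then (s a.1)^-1 else s a.1) * acc)%g) 1%g w.

(* pi : F ->> Gamma given by s = pi restricted to X; surjectivity *)
Definition epi_from_free (k : nat) (G : groupType) (s : 'I_k -> G) : Prop :=
  forall g : G, exists w : seq (letter k), eval_word s w = g.

Definition in_ker (k : nat) (G : groupType) (s : 'I_k -> G)
  (r : seq (letter k)) : Prop :=
  reduced_word r /\ eval_word s r = 1%g.

Definition hdist (R : realType) (Om : finType) (sig tau : {perm Om}) : R :=
  (#|[set w | sig w != tau w]|%:R / #|Om|%:R)%R.
Arguments hdist {R Om}.

Definition is_hom (G H : groupType) (f : G -> H) : Prop :=
  forall g h : G, f (g * h)%g = (f g * f h)%g.

Definition Enorm (k : nat) (E : seq (seq (letter k))) : nat :=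
  sumn (map (@word_len k) E).

(* (delta, E) is valid for eps. E is a finite subset of ker pi
   (a duplicate-free list of reduced words in the kernel).  A
   homomorphism rho : F -> Sym(Omega) is given by its values on X. *)
Definition valid_pair (R : realType) (k : nat) (G : groupType)
  (s : 'I_k -> G) (delta : R) (E : seq (seq (letter k))) (eps : R) : Prop :=
  [/\ (0 < delta)%R, (delta <= 1)%R, uniq E, (forall r, r \in E -> in_ker s r) &
   forall (Om : finType) (rho : 'I_k -> {perm Om}),
     (forall r, r \in E -> (hdist (eval_word rho r) 1%g < delta)%R) ->
     exists phi : G -> {perm Om},
       is_hom phi /\ forall x : 'I_k, (hdist (rho x) (phi (s x)) < eps)%R].

Definition stable (R : realType) (k : nat) (G : groupType) (s : 'I_k -> G)
  : Prop :=
  forall eps : R, (0 < eps)%R -> exists delta E, valid_pair s delta E eps.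

(* F_Gamma^pi(x), an extended real (+oo if no valid pair exists) *)
Definition stab_fun (R : realType) (k : nat) (G : groupType)
  (s : 'I_k -> G) (x : R) : \bar R :=
  ereal_inf [set z : \bar R | exists (delta : R) E,
     valid_pair s delta E (x^-1)%R /\ z = ((Enorm E)%:R / delta)%:E].

Definition ball (R : realType) (k : nat) (G : groupType) (s : 'I_k -> G)
  (t : R) : G -> Prop :=
  fun g => exists w : seq (letter k), ((size w)%:R <= t)%R /\ eval_word s w = g.

Definition ball_nat (k : nat) (G : groupType) (s : 'I_k -> G)
  (l : nat) : G -> Prop :=
  fun g => exists w : seq (letter k), (size w <= l)%N /\ eval_word s w = g.

Definition local_embedding (G : groupType) (H : groupType) (A : G -> Prop)
  (psi : G -> H) : Prop :=
  (forall g h, A g -> A h -> psi g = psi h -> g = h) /\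
  (forall g h, A g -> A h -> A (g * h)%g -> psi (g * h)%g = (psi g * psi h)%g).

(* membership in a list, for types without decidable equality *)
Fixpoint in_seq (T : Type) (x : T) (A : seq T) : Prop :=
  if A is y :: A' then y = x \/ in_seq x A' else False.

Definition LEF (G : groupType) : Prop :=
  forall A : seq G, exists (D : finGroupType) (psi : G -> D),
    local_embedding (fun g => in_seq g A) psi.

Definition LE_order (R : realType) (k : nat) (G : groupType) (s : 'I_k -> G)
  (t : R) (n : nat) : Prop :=
  exists (D : finGroupType) (psi : G -> D),
    #|D| = n /\ local_embedding (ball s t) psi.

Definition RF_order (k : nat) (G : groupType) (s : 'I_k -> G)
  (l : nat) (n : nat) : Prop :=
  exists (D : finGroupType) (f : G -> D),
    #|D| = n /\ is_hom f /\
    (forall g h, ball_nat s l g -> ball_nat s l h -> f g = f h -> g = h).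

Definition is_LEF_growth (R : realType) (k : nat) (G : groupType)
  (s : 'I_k -> G) (t : R) (n : nat) : Prop :=
  LE_order s t n /\ forall m, LE_order s t m -> (n <= m)%N.

Definition is_RF_growth (k : nat) (G : groupType) (s : 'I_k -> G)
  (l : nat) (n : nat) : Prop :=
  RF_order s l n /\ forall m, RF_order s l m -> (n <= m)%N.

From Pilot Require Import Defs.
From HB Require Import structures.
From mathcomp Require Import all_boot all_order all_algebra all_fingroup.
From mathcomp Require Import all_classical all_reals all_analysis.
From mathcomp Require Import lra.

Import Order.TTheory GRing.Theory Num.Theory.

(* Let psi embed the ball of radius t = C' l^C locally into a finite group D and
   let rho send each generator to the right translation of D by its psi-image.
   On words of length <= t, rho is the right translation by psi of their value,
   so the relators of a valid pair (delta, E) for eps = 1/(2l+1) with ||E|| <= t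
   act trivially; the polynomial bound on F provides such a pair.  Stability then
   gives a homomorphism phi : Gamma -> Sym(D) with phi(w) within |w| eps of rho(w).
   Distinct elements of B(l) go under rho to translations differing at every point
   of D, whereas phi moves each by less than l eps < 1/2, so phi is injective on
   B(l) and R(l) <= |Sym(D)| = |D|!. *)

Section Homomorphisms.
Context {G H : groupType} {f : G -> H}.
Hypothesis f_hom : is_hom f.

Lemma is_hom1 : f 1%g = 1%g.
Proof. by apply: (@mulgI _ (f 1%g)); rewrite -f_hom !mulg1. Qed.

Lemma is_homV (g : G) : f g^-1%g = (f g)^-1%g.
Proof. by apply: (@mulIg _ (f g)); rewrite -f_hom !mulVg is_hom1. Qed.

Lemma eval_word_hom {k : nat} (s : 'I_k -> G) (w : seq (letter k)) :
  eval_word (fun i => f (s i)) w = f (eval_word s w).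
Proof.
elim: w => [|[i b] w IH] /=; first by rewrite is_hom1.
by rewrite IH f_hom; case: b => //; rewrite is_homV.
Qed.

End Homomorphisms.

Section Hamming.
Context {Om : finType}.
Implicit Types p q r : {perm Om}.

Definition hamming p q : nat := #|[set w | p w != q w]|.

Lemma hamming_refl p : hamming p p = 0%N.
Proof. by apply/eqP; rewrite cards_eq0; apply/eqP/setP => w; rewrite !inE eqxx. Qed.

Lemma hamming_sym p q : hamming p q = hamming q p.
Proof. by apply: eq_card => w; rewrite !inE eq_sym. Qed.

Lemma hamming_triangle p q r : (hamming p r <= hamming p q + hamming q r)%N.
Proof.
apply: leq_trans (leq_card_setU [set w | p w != q w] [set w | q w != r w]).
apply: subset_leq_card; apply/fintype.subsetP => w; rewrite !inE.
by case: (p w =P q w) => //= ->.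
Qed.

Lemma hamming_mul2r p q r : hamming (p * r) (q * r) = hamming p q.
Proof. by apply: eq_card => w; rewrite !inE !permM (inj_eq perm_inj). Qed.

Lemma hamming_mul2l p q r : hamming (r * p) (r * q) = hamming p q.
Proof.
rewrite /hamming -(card_preimset [set w | p w != q w] (@perm_inj _ r)).
by apply: eq_card => w; rewrite !inE !permM.
Qed.

Lemma hamming_inv p q : hamming p^-1 q^-1 = hamming p q.
Proof.
rewrite -(hamming_mul2l p^-1 q^-1 p) mulgV -(hamming_mul2r 1 (p * q^-1) q).
by rewrite mul1g -mulgA mulVg mulg1 hamming_sym.
Qed.

Lemma hamming_mul p1 p2 q1 q2 :
  (hamming (p1 * p2) (q1 * q2) <= hamming p1 q1 + hamming p2 q2)%N.
Proof.
apply: leq_trans (hamming_triangle (p1 * p2) (q1 * p2) (q1 * q2)) _.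
by rewrite hamming_mul2r hamming_mul2l.
Qed.

Variable R : realType.

Lemma hdist_hamming_le p q p1 q1 p2 q2 :
  (hamming p q <= hamming p1 q1 + hamming p2 q2)%N ->
  (hdist p q <= hdist p1 q1 + hdist p2 q2 :> R)%R.
Proof.
by move=> le; rewrite /hdist -mulrDl ler_wpM2r // -natrD ler_nat.
Qed.

Lemma hdist_refl p : hdist p p = 0%R :> R.
Proof. by rewrite /hdist -/(hamming p p) hamming_refl mul0r. Qed.

Lemma hdist_sym p q : hdist p q = hdist q p :> R.
Proof. by rewrite /hdist -/(hamming p q) hamming_sym. Qed.

Lemma hdist_inv p q : hdist p^-1 q^-1 = hdist p q :> R.
Proof. by rewrite /hdist -/(hamming p q) -hamming_inv. Qed.

Lemma hdist_triangle p q r : (hdist p r <= hdist p q + hdist q r :> R)%R.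
Proof. exact/hdist_hamming_le/hamming_triangle. Qed.

Lemma hdist_mul p1 p2 q1 q2 :
  (hdist (p1 * p2) (q1 * q2) <= hdist p1 q1 + hdist p2 q2 :> R)%R.
Proof. exact/hdist_hamming_le/hamming_mul. Qed.

Lemma hdist_eval_word {k : nat} {r1 r2 : 'I_k -> {perm Om}} {a : R} w :
  (forall i, hdist (r1 i) (r2 i) <= a)%R ->
  (hdist (eval_word r1 w) (eval_word r2 w) <= (size w)%:R * a)%R.
Proof.
move=> close; elim: w => [|[i b] w IH] /=; first by rewrite hdist_refl mul0r.
apply: le_trans (hdist_mul _ _ _ _) _.
by rewrite -nat1r mulrDl mul1r lerD //; case: b; rewrite ?hdist_inv.
Qed.

End Hamming.

Definition regular_perm {D : finGroupType} (c : D) : {perm D} := perm (@mulIg D c).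

Lemma regular_perm_hom (D : finGroupType) : is_hom (@regular_perm D).
Proof. by move=> x y; apply/permP => d; rewrite permM !permE mulgA. Qed.

Lemma hdist_regular_perm (R : realType) (D : finGroupType) (a b : D) :
  a != b -> hdist (regular_perm a) (regular_perm b) = 1%R :> R.
Proof.
move=> ab; rewrite /hdist -/(hamming _ _).
have -> : hamming (regular_perm a) (regular_perm b) = #|D|.
  rewrite -cardsT; apply: eq_card => d.
  by rewrite !inE !permE (inj_eq (@mulgI _ d)).
by rewrite divff // pnatr_eq0 -lt0n; apply/card_gt0P; exists 1%g.
Qed.

Lemma card_perm_finType (T : finType) : #|{perm T}| = (#|T|)`!.
Proof.
rewrite -cardsT -card_perm; apply: eq_card => p.
rewrite inE unfold_in /perm_on /=.
by apply/esym/fintype.subsetP => x _; rewrite finset.in_setT.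
Qed.

Section LocalEmbedding.
Context {G D : groupType} {A : G -> Prop} {psi : G -> D}.
Hypothesis emb : local_embedding A psi.

Lemma local_embedding1 : A 1%g -> psi 1%g = 1%g.
Proof. by move=> A1; apply: (@mulgI _ (psi 1%g)); rewrite -emb.2 ?mulg1. Qed.

Lemma local_embeddingV g : A 1%g -> A g -> A g^-1%g -> psi g^-1%g = (psi g)^-1%g.
Proof.
move=> A1 Ag Agi; apply/eqP; rewrite -mulg_eq1 -emb.2 ?mulVg //.
exact/eqP/local_embedding1.
Qed.

End LocalEmbedding.

Lemma ball_eval_word {R : realType} {k : nat} {G : groupType} (s : 'I_k -> G)
    {t : R} {w} :
  ((size w)%:R <= t)%R -> Defs.ball s t (eval_word s w).
Proof. by exists w. Qed.

Lemma local_embedding_eval_word {R : realType} {k : nat} {G : groupType}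
    {s : 'I_k -> G} {D : groupType} {psi : G -> D} {t : R} {w} :
  local_embedding (Defs.ball s t) psi -> ((size w)%:R <= t)%R ->
  eval_word (fun i => psi (s i)) w = psi (eval_word s w).
Proof.
move=> emb; elim: w => [|[i b] w IH] hw.
  by rewrite /= (local_embedding1 emb) //; exact: (ball_eval_word s hw).
have t1 : (1 <= t)%R by apply: le_trans hw; rewrite ler1n.
have ball1 : Defs.ball s t 1%g by exists [::]; split => //; apply: le_trans t1.
have ball_si : Defs.ball s t (s i) by exists [:: (i, false)]; rewrite /= mulg1.
have ball_siV : Defs.ball s t (s i)^-1 by exists [:: (i, true)]; rewrite /= mulg1.
have hw' : ((size w)%:R <= t)%R by apply: le_trans hw; rewrite ler_nat.
have ball_w := ball_eval_word s hw'.
have ball_iw := ball_eval_word s hw.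
have ball_letter : Defs.ball s t (if b then (s i)^-1 else s i)%g by case: (b).
rewrite /= IH // emb.2 //.
by case: (b) => //; rewrite (local_embeddingV emb).
Qed.

Lemma size_le_Enorm (k : nat) (E : seq (seq (letter k))) r :
  r \in E -> (size r <= Enorm E)%N.
Proof.
elim: E => //= r' E IH; rewrite inE => /orP [/eqP ->|/IH h].
  by rewrite /Enorm /= /word_len leq_addr.
by apply: leq_trans h _; rewrite /Enorm /= leq_addl.
Qed.

Section RegularRepresentation.
Context {R : realType} {k : nat} {G : groupType} {s : 'I_k -> G}.
Context {D : finGroupType} {psi : G -> D} {t : R}.
Hypothesis emb : local_embedding (Defs.ball s t) psi.

Let rho (i : 'I_k) : {perm D} := regular_perm (psi (s i)).

Lemma eval_word_regular_perm w :
  ((size w)%:R <= t)%R -> eval_word rho w = regular_perm (psi (eval_word s w)).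
Proof.
move=> hw; rewrite -(local_embedding_eval_word emb hw).
exact: (eval_word_hom (@regular_perm_hom D) (fun i => psi (s i)) w).
Qed.

Lemma eval_word_regular_perm_ker r :
  in_ker s r -> ((size r)%:R <= t)%R -> eval_word rho r = 1%g.
Proof.
move=> [_ r1] hr; rewrite eval_word_regular_perm // r1 (local_embedding1 emb).
  exact: is_hom1 (@regular_perm_hom D).
by exists [::]; split => //; apply: le_trans hr.
Qed.

Lemma close_to_regular_inj_ball (phi : G -> {perm D}) (eps : R) (l : nat) :
  is_hom phi -> (forall i, hdist (rho i) (phi (s i)) < eps)%R ->
  (0 <= eps)%R -> (2 * l%:R * eps < 1)%R -> (l%:R <= t)%R ->
  forall g h, ball_nat s l g -> ball_nat s l h -> phi g = phi h -> g = h.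
Proof.
move=> phi_hom close eps_ge0 small lt g h [w1 [hw1 <-]] [w2 [hw2 <-]] phi12.
have [//|ne] := eqVneq (eval_word s w1) (eval_word s w2).
have in_ball (w : seq (letter k)) : (size w <= l)%N -> ((size w)%:R <= t)%R.
  by move=> hw; apply: le_trans lt; rewrite ler_nat.
have psi_ne : psi (eval_word s w1) != psi (eval_word s w2).
  by apply: contra_neq ne; apply: emb.1; apply: ball_eval_word; apply: in_ball.
have far : hdist (eval_word rho w1) (eval_word rho w2) = 1%R :> R.
  by rewrite !eval_word_regular_perm ?in_ball // hdist_regular_perm.
have near w : (size w <= l)%N ->
    (hdist (eval_word rho w) (phi (eval_word s w)) <= l%:R * eps)%R.
  move=> hw; rewrite -(eval_word_hom phi_hom).
  apply: le_trans (hdist_eval_word R w (fun i => ltW (close i))) _.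
  by rewrite ler_wpM2r // ler_nat.
have near1 := near _ hw1; have near2 := near _ hw2.
rewrite -phi12 hdist_sym in near2.
have := hdist_triangle R (eval_word rho w1) (phi (eval_word s w1)) (eval_word rho w2).
by rewrite far => triangle; exfalso; lra.
Qed.

Lemma RF_order_of_valid_pair {delta eps : R} {E} {l : nat} :
  valid_pair s delta E eps -> ((Enorm E)%:R <= t)%R ->
  (0 <= eps)%R -> (2 * l%:R * eps < 1)%R -> (l%:R <= t)%R ->
  RF_order s l #|{perm D}|.
Proof.
case=> delta_gt0 _ _ kerE stabE hE eps_ge0 small lt.
have [|phi [phi_hom close]] := stabE D rho.
  move=> r rE; rewrite eval_word_regular_perm_ker ?hdist_refl; [done|exact: kerE|].
  by apply: le_trans hE; rewrite ler_nat size_le_Enorm.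
exists {perm D}, phi; do 2!split => //.
exact: close_to_regular_inj_ball.
Qed.

End RegularRepresentation.

Lemma ex_minn_Prop {P : nat -> Prop} {n0 : nat} : P n0 ->
  exists n, (P n /\ forall m, P m -> (n <= m)%N) /\ (n <= n0)%N.
Proof.
move=> Pn0; have exP : exists n, `[< P n >] by exists n0; apply/asboolP.
case: (ex_minnP exP) => n /asboolP Pn n_min.
by exists n; split; [split => // m Pm|]; apply: n_min; apply/asboolP.
Qed.

Lemma stab_fun_lt_valid_pair (R : realType) (k : nat) (G : groupType)
    (s : 'I_k -> G) (x y : R) :
  (stab_fun s x < y%:E)%E ->
  exists delta E, valid_pair s delta E x^-1 /\ ((Enorm E)%:R < y)%R.
Proof.
case/ereal_inf_lt => _ [delta [E [valid ->]]]; rewrite lte_fin => lt_y.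
exists delta, E; split => //; apply: le_lt_trans lt_y.
have [delta_gt0 delta_le1 _ _ _] := valid.
by rewrite ler_pdivlMr // ler_piMr.
Qed.

Lemma powR_affine_le {R : realType} {C L : R} : (1 <= C)%R -> (1 <= L)%R ->
  (C * powR (2 * L + 1) C + 1 <= (C * powR 3 C + 2) * powR L C)%R /\
  (L <= (C * powR 3 C + 2) * powR L C)%R.
Proof.
move=> C_ge1 L_ge1.
have L_le : (L <= powR L C)%R by apply: le1r_powR.
have C3_ge0 : (0 <= C * powR 3 C)%R by apply: mulr_ge0; [lra|apply: powR_ge0].
have C3L_ge0 : (0 <= C * powR 3 C * powR L C)%R by apply: mulr_ge0; [|apply: powR_ge0].
have pow_le : (powR (2 * L + 1) C <= powR 3 C * powR L C)%R.
  rewrite -powRM; [|lra|lra].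
  by apply: ge0_ler_powR; rewrite ?nnegrE; lra.
have : (C * powR (2 * L + 1) C <= C * (powR 3 C * powR L C))%R.
  by rewrite ler_wpM2l //; lra.
by rewrite mulrDl mulrA; split; lra.
Qed.

Theorem corollary2p15 (R : realType) (k : nat) (G : groupType)
  (s : 'I_k -> G) (C : R) :
  epi_from_free s ->
  stable R s ->
  LEF G ->
  (1 <= C)%R ->
  (forall x : R, (1 <= x)%R -> (stab_fun s x <= (C * powR x C)%:E)%E) ->
  exists C' : R, (0 < C')%R /\
    forall l : nat, (0 < l)%N ->
      forall nL : nat, is_LEF_growth s (C' * powR (l%:R) C)%R nL ->
        exists nR : nat, is_RF_growth s l nR /\ (nR <= nL`!)%N.
Proof.
move=> _ _ _ C_ge1 F_bound.
have C3_ge0 : (0 <= C * powR 3 C)%R by apply: mulr_ge0; [lra|apply: powR_ge0].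
exists (C * powR 3 C + 2)%R; split; first lra.
move=> l l_gt0 nL [[D [psi [<- emb]]] _].
have L_ge1 : (1 <= l%:R :> R)%R by rewrite ler1n.
set x : R := (2 * l%:R + 1)%R.
have [delta [E [valid E_lt]]] : exists delta E,
    valid_pair s delta E x^-1 /\ ((Enorm E)%:R < C * powR x C + 1)%R.
  apply: stab_fun_lt_valid_pair; apply: le_lt_trans (F_bound x _) _.
    by rewrite /x; lra.
  by rewrite lte_fin; lra.
have [E_le l_le] := powR_affine_le C_ge1 L_ge1.
have x_gt0 : (0 < x)%R by rewrite /x; lra.
have small : (2 * l%:R * x^-1 < 1)%R by rewrite ltr_pdivrMr // mul1r /x; lra.
have eps_ge0 : (0 <= x^-1)%R by rewrite invr_ge0 ltW.
have RF := RF_order_of_valid_pair emb valid (ltW (lt_le_trans E_lt E_le))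
  eps_ge0 small l_le.
have [nR [nR_least nR_le]] := ex_minn_Prop RF.
by exists nR; rewrite -card_perm_finType.
Qed.
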